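(* Under the hypotheses of the previous setting — $f\in C^2(0,\infty)$ with $f'>0$, $(u,m)$ a classical solution ($u\in C^3$, $m\in C^2$) of $-u_t+\frac12u_x^2=f(m)$, $m_t-(mu_x)_x=0$ in $\mathbb R\times(0,T)$ with $m>0$ and $u_x$ of at most linear growth, $m_0=m(\cdot,0)$, and $\gamma$ the solution of $\gamma_t(x,t)=-u_x(\gamma(x,t),t)$, $\gamma(x,0)=x$ — the function $v(x,t)=f(m(\gamma(x,t),t))$ satisfies $$-\Big(\frac{v_x}{\gamma_x}\Big)_x-\Big(\frac{\gamma_x^2}{m_0f'(m_0/\gamma_x)}v_t\Big)_t=0\qquad\text{in }\mathbb R\times(0,T).$$ In particular, if $f(m)=m^\theta$ ($\theta>0$), then $-\big(\frac{v_x}{\gamma_x}\big)_x-\big(\frac{\gamma_x}{\theta v}v_t\big)_t=0$, equivalently $-v_{tt}-\frac{\theta v}{\gamma_x^2}v_{xx}+v_x\frac{\theta v}{\gamma_x^3}\gamma_{xx}+\frac{\theta+1}{\theta}v^{-1}v_t^2=0$; and if $f(m)=\log m$, then $-\big(\frac{v_x}{\gamma_x}\big)_x-(\gamma_xv_t)_t=0$. *)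

From Stdlib Require Import Reals Lra.
From Coquelicot Require Import Coquelicot.
Open Scope R_scope.

(* Functions of (x,t) are curried: g : R -> R -> R, g x t. *)

Definition px (g : R -> R -> R) : R -> R -> R :=
  fun x t => Derive (fun y => g y t) x.
Definition pt (g : R -> R -> R) : R -> R -> R :=
  fun x t => Derive (fun s => g x s) t.

Definition open2 (U : R -> R -> Prop) : Prop :=
  forall x t, U x t -> exists eps : R, 0 < eps /\
    forall y s, Rabs (y - x) < eps -> Rabs (s - t) < eps -> U y s.

Definition cont2 (g : R -> R -> R) (x t : R) : Prop :=
  continuous (fun p : R * R => g (fst p) (snd p)) (x, t).

Fixpoint Ck (k : nat) (U : R -> R -> Prop) (g : R -> R -> R) : Prop :=
  match k with
  | O => forall x t, U x t -> cont2 g x t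
  | S k' =>
      (forall x t, U x t ->
         cont2 g x t /\ ex_derive (fun y => g y t) x /\ ex_derive (fun s => g x s) t)
      /\ Ck k' U (px g) /\ Ck k' U (pt g)
  end.

Definition C2_pos (f : R -> R) : Prop :=
  forall y, 0 < y ->
    continuous f y /\ ex_derive f y /\ continuous (Derive f) y /\
    ex_derive (Derive f) y /\ continuous (Derive (Derive f)) y.

Definition vfun (f : R -> R) (m gamma : R -> R -> R) : R -> R -> R :=
  fun x t => f (m (gamma x t) t).

Definition m0 (m : R -> R -> R) : R -> R := fun x => m x 0.

Definition flux_x (v gamma : R -> R -> R) : R -> R -> R :=
  fun x t => px v x t / px gamma x t.

Definition flux_t (f : R -> R) (m v gamma : R -> R -> R) : R -> R -> R :=
  fun x t => (px gamma x t) ^ 2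
             / (m0 m x * Derive f (m0 m x / px gamma x t)) * pt v x t.

From Stdlib Require Import Reals Lra.
From Coquelicot Require Import Coquelicot.
Open Scope R_scope.

(* The flow transports m: by Fokker-Planck and the Leibniz rule the mass between two
   characteristics is constant, hence equal to int_a^b m0, and differentiating in b
   gives gamma_x = m0 / m(gamma, t); along a characteristic, d/dt m(gamma, t) = m u_xx.
   So the first flux v_x / gamma_x is f'(m) m_x and the second is m0 u_xx / m (at
   (gamma, t)), and the sum of their derivatives is -(m0/m) times the Hamilton-Jacobi
   equation differentiated twice in x.  For f = m^theta (resp. log m), m f'(m) =
   theta f(m) (resp. 1) turns the second flux into gamma_x v_t / (theta v) (resp.
   gamma_x v_t). *)

Lemma Ck_weaken k U g : Ck (S k) U g -> Ck k U g.
Proof.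
  revert g; induction k as [|k IH]; intros g [H0 [Hx Ht]].
  - intros x t Hxt; apply (H0 x t Hxt).
  - split; [exact H0 | split; apply IH; assumption].
Qed.

Lemma Ck_partials k U g x t : Ck (S k) U g -> U x t ->
  cont2 g x t /\ ex_derive (fun y => g y t) x /\ ex_derive (fun s => g x s) t.
Proof. intros [H _] Hxt. exact (H x t Hxt). Qed.

Lemma Ck_cont k U g x t : Ck k U g -> U x t -> cont2 g x t.
Proof. destruct k; intros H Hxt; [exact (H x t Hxt) | apply (Ck_partials k U g x t H Hxt)]. Qed.

Lemma ball_R (x e y : R) : ball x e y -> Rabs (y - x) < e.
Proof. intro H; exact H. Qed.

Lemma cont2_2d g x t : cont2 g x t -> continuity_2d_pt g x t.
Proof. intro H. apply continuity_2d_pt_filterlim. exact H. Qed.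

Lemma continuous_eps (h : R -> R) x : continuous h x <->
  forall eps : posreal, exists d : posreal,
    forall y, Rabs (y - x) < d -> Rabs (h y - h x) < eps.
Proof.
  unfold continuous; rewrite filterlim_locally. split; intros H eps.
  - destruct (H eps) as [d Hd]. exists d. intros y Hy. apply Hd. exact Hy.
  - destruct (H eps) as [d Hd]. exists d. intros y Hy. apply Hd. exact Hy.
Qed.

Lemma cont2_slice g x t : cont2 g x t -> continuous (fun y => g y t) x.
Proof.
  intro H. apply continuous_eps. intro eps. destruct (cont2_2d _ _ _ H eps) as [d Hd].
  exists d. intros y Hy. apply Hd; [exact Hy|]. rewrite Rminus_eq_0, Rabs_R0. apply cond_pos.
Qed.

Lemma cont2_swap g x t : cont2 g x t -> continuity_2d_pt (fun a b => g b a) t x.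
Proof. intros H eps. destruct (cont2_2d _ _ _ H eps) as [d Hd]. exists d. intros; apply Hd; auto. Qed.

Lemma px_is_derive (g : R -> R -> R) x t l : is_derive (fun y => g y t) x l -> px g x t = l.
Proof. apply is_derive_unique. Qed.

Lemma pt_is_derive (g : R -> R -> R) x t l : is_derive (fun s => g x s) t l -> pt g x t = l.
Proof. apply is_derive_unique. Qed.

(* A C^1 function on an open set is (Fréchet) differentiable, with the partial
   derivatives as gradient: mean value theorem in each variable plus continuity of
   the partials. *)
Lemma C1_differentiable U g x t : open2 U -> Ck 1 U g -> U x t ->
  differentiable_pt_lim g x t (px g x t) (pt g x t).
Proof.
  intros HU [Hg [Hx Ht]] Hxt eps.
  destruct (HU x t Hxt) as [e0 [He0 HUe]].
  assert (He2 : 0 < eps / 2) by (destruct eps; simpl; lra).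
  destruct (cont2_2d _ _ _ (Hx x t Hxt) (mkposreal _ He2)) as [d1 Hd1].
  destruct (cont2_2d _ _ _ (Ht x t Hxt) (mkposreal _ He2)) as [d2 Hd2].
  simpl in Hd1, Hd2.
  assert (Hd : 0 < Rmin e0 (Rmin d1 d2)).
  { destruct d1, d2; simpl. repeat apply Rmin_glb_lt; auto. }
  exists (mkposreal _ Hd). simpl. intros u v Hu Hv.
  assert (B1 := Rmin_l e0 (Rmin d1 d2)). assert (B2 := Rmin_r e0 (Rmin d1 d2)).
  assert (B3 := Rmin_l d1 d2). assert (B4 := Rmin_r d1 d2).
  (* increments along the two sides of the rectangle *)
  destruct (MVT_cor4 (fun z => g z v) (fun z => px g z v) x (Rabs (u - x))) with (b := u)
    as [c [Hc1 Hc2]]; [| right; reflexivity |].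
  { intros c Hc. assert (U c v) by (apply HUe; lra).
    apply Derive_correct. apply (Hg c v H). }
  destruct (MVT_cor4 (fun z => g x z) (fun z => pt g x z) t (Rabs (v - t))) with (b := v)
    as [c' [Hc1' Hc2']]; [| right; reflexivity |].
  { intros c0 Hc. assert (U x c0) by (apply HUe; [rewrite Rminus_eq_0, Rabs_R0 |]; lra).
    apply Derive_correct. apply (Hg x c0 H). }
  simpl in Hc1, Hc1'.
  assert (E : g u v - g x t - (px g x t * (u - x) + pt g x t * (v - t)) =
     (px g c v - px g x t) * (u - x) + (pt g x c' - pt g x t) * (v - t)) by lra.
  rewrite E.
  assert (A1 : Rabs (px g c v - px g x t) < eps / 2) by (apply Hd1; lra).
  assert (A2 : Rabs (pt g x c' - pt g x t) < eps / 2).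
  { apply Hd2; [rewrite Rminus_eq_0, Rabs_R0 |]; lra. }
  eapply Rle_trans; [apply Rabs_triang |]. rewrite !Rabs_mult.
  assert (M1 := Rmax_l (Rabs (u - x)) (Rabs (v - t))).
  assert (M2 := Rmax_r (Rabs (u - x)) (Rabs (v - t))).
  assert (Rabs (px g c v - px g x t) * Rabs (u - x) <= eps / 2 * Rmax (Rabs (u - x)) (Rabs (v - t)))
    by (apply Rmult_le_compat; try apply Rabs_pos; lra).
  assert (Rabs (pt g x c' - pt g x t) * Rabs (v - t) <= eps / 2 * Rmax (Rabs (u - x)) (Rabs (v - t)))
    by (apply Rmult_le_compat; try apply Rabs_pos; lra).
  lra.
Qed.

Lemma chain_rule_curve U (g : R -> R -> R) (a : R -> R) s da :
  open2 U -> Ck 1 U g -> U (a s) s -> is_derive a s da ->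
  is_derive (fun s' => g (a s') s') s (px g (a s) s * da + pt g (a s) s).
Proof.
  intros HU Hg Has Ha. apply is_derive_Reals.
  replace (px g (a s) s * da + pt g (a s) s) with (px g (a s) s * da + pt g (a s) s * 1) by ring.
  apply (derivable_pt_lim_comp_2d g a (fun s => s)).
  - apply C1_differentiable with U; auto.
  - apply is_derive_Reals; auto.
  - apply derivable_pt_lim_id.
Qed.

Lemma C2_schwarz U g x t : open2 U -> Ck 2 U g -> U x t -> px (pt g) x t = pt (px g) x t.
Proof.
  intros HU [Hb [Hpx Hpt]] Hxt.
  destruct (HU x t Hxt) as [e [He HUe]].
  unfold px, pt. apply Schwarz.
  - exists (mkposreal e He). simpl. intros u v Hu Hv. assert (U u v) by auto.
    destruct (Hb u v H) as [_ [H1 H2]].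
    destruct (Ck_partials 0 U _ u v Hpt H) as [_ [H3 _]].
    destruct (Ck_partials 0 U _ u v Hpx H) as [_ [_ H4]].
    repeat split; auto.
  - apply cont2_2d. destruct Hpt as [_ [Hc _]]. apply Hc; auto.
  - apply cont2_2d. destruct Hpx as [_ [_ Hc]]. apply Hc; auto.
Qed.

Lemma Rabs_between a b c : Rmin a b <= c <= Rmax a b -> Rabs (c - a) <= Rabs (b - a).
Proof. unfold Rmin, Rmax; destruct (Rle_dec a b); intros; unfold Rabs; repeat destruct Rcase_abs; lra. Qed.

Lemma is_derive_continuity_pt (h : R -> R) dh y : is_derive h y dh -> continuity_pt h y.
Proof.
  intro H. apply continuity_pt_filterlim.
  apply (ex_derive_continuous (K := R_AbsRing) (V := R_NormedModule)). exists dh; exact H.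
Qed.

Lemma deriv_pos_increasing (h dh : R -> R) :
  (forall y, is_derive h y (dh y)) -> (forall y, 0 < dh y) ->
  forall y1 y2, y1 < y2 -> h y1 < h y2.
Proof.
  intros Hd Hp y1 y2 Hy.
  destruct (MVT_gen h y1 y2 dh) as [c [_ Hc]].
  - intros; apply Hd.
  - intros; eapply is_derive_continuity_pt; apply Hd.
  - assert (0 < dh c * (y2 - y1)) by (apply Rmult_lt_0_compat; [apply Hp | lra]). lra.
Qed.

Lemma increasing_factor_continuous (F G g : R -> R) x0 :
  (forall y1 y2, y1 < y2 -> F y1 < F y2) ->
  (forall x, F (g x) = G x) -> continuous G x0 -> continuous g x0.
Proof.
  intros Hinc HFG HG. apply continuous_eps. intro eps. set (y0 := g x0).
  assert (Hle : forall a b, a <= b -> F a <= F b) by (intros a b [H|H]; [left; auto | subst; lra]).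
  assert (P1 := Hinc y0 (y0 + eps) ltac:(destruct eps; simpl; lra)).
  assert (P2 := Hinc (y0 - eps) y0 ltac:(destruct eps; simpl; lra)).
  assert (Hd : 0 < Rmin (F (y0 + eps) - F y0) (F y0 - F (y0 - eps))) by (apply Rmin_glb_lt; lra).
  destruct (proj1 (continuous_eps G x0) HG (mkposreal _ Hd)) as [d Hd']. exists d. intros x Hx.
  specialize (Hd' x Hx). simpl in Hd'. rewrite <- !HFG in Hd'. fold y0 in Hd'.
  assert (M1 := Rmin_l (F (y0 + eps) - F y0) (F y0 - F (y0 - eps))).
  assert (M2 := Rmin_r (F (y0 + eps) - F y0) (F y0 - F (y0 - eps))).
  apply Rabs_def2 in Hd'. destruct Hd' as [Q1 Q2].
  apply Rabs_def1.
  - destruct (Rlt_dec (g x - y0) eps) as [? | n]; auto.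
    assert (F (y0 + eps) <= F (g x)) by (apply Hle; lra). lra.
  - destruct (Rlt_dec (- eps) (g x - y0)) as [? | n]; auto.
    assert (F (g x) <= F (y0 - eps)) by (apply Hle; lra). lra.
Qed.

(* Implicit differentiation: if F o g = G, with F' > 0 and F', G' continuous,
   then g' = G' / F' o g.  Both difference quotients are handled by the mean
   value theorem. *)
Lemma increasing_factor_derive (F dF G dG g : R -> R) x0 :
  (forall y, is_derive F y (dF y)) -> (forall y, 0 < dF y) ->
  (forall x, is_derive G x (dG x)) -> continuous dF (g x0) -> continuous dG x0 ->
  (forall x, F (g x) = G x) -> is_derive g x0 (dG x0 / dF (g x0)).
Proof.
  intros HF HFp HG HcF HcG HFG.
  assert (Hgc : continuous g x0).
  { apply increasing_factor_continuous with F G; auto.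
    - apply (deriv_pos_increasing F dF); auto.
    - apply (ex_derive_continuous (K := R_AbsRing) (V := R_NormedModule)). exists (dG x0); auto. }
  set (y0 := g x0).
  apply is_derive_Reals. intros eps Heps.
  assert (Hdiv : continuity_2d_pt (fun a b => a * / b) (dG x0) (dF y0)).
  { apply continuity_2d_pt_mult; [apply continuity_2d_pt_id1 |].
    apply continuity_2d_pt_inv; [apply continuity_2d_pt_id2 |]. specialize (HFp y0); lra. }
  destruct (Hdiv (mkposreal _ Heps)) as [eta Heta]. simpl in Heta.
  destruct (proj1 (continuous_eps dG x0) HcG eta) as [d1 Hd1].
  destruct (proj1 (continuous_eps dF y0) HcF eta) as [d2 Hd2].
  destruct (proj1 (continuous_eps g x0) Hgc d2) as [d3 Hd3].
  assert (Hd : 0 < Rmin d1 d3) by (destruct d1, d3; simpl; apply Rmin_glb_lt; auto).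
  exists (mkposreal _ Hd). simpl. intros h Hh0 Hh.
  assert (B1 := Rmin_l d1 d3). assert (B2 := Rmin_r d1 d3).
  destruct (MVT_gen G x0 (x0 + h) dG) as [c1 [Hc1 E1]].
  { intros; apply HG. } { intros; eapply is_derive_continuity_pt; apply HG. }
  destruct (MVT_gen F y0 (g (x0 + h)) dF) as [c2 [Hc2 E2]].
  { intros; apply HF. } { intros; eapply is_derive_continuity_pt; apply HF. }
  rewrite !HFG in E2. unfold y0 in E2. rewrite HFG in E2.
  apply Rabs_between in Hc1. apply Rabs_between in Hc2.
  replace (x0 + h - x0) with h in * by ring.
  assert (HdF2 := HFp c2).
  assert (Q : (g (x0 + h) - g x0) / h = dG c1 * / dF c2).
  { assert (g (x0 + h) - g x0 = dG c1 * h / dF c2).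
    { fold y0. apply (Rmult_eq_reg_r (dF c2)); [| lra].
      field_simplify; [| lra]. rewrite <- E1, E2. fold y0. ring. }
    rewrite H. field. split; lra. }
  rewrite Q. apply Heta.
  - apply Hd1. lra.
  - apply Hd2. assert (Rabs (g (x0 + h) - y0) < d2).
    { apply Hd3. replace (x0 + h - x0) with h by ring. lra. }
    lra.
Qed.

Lemma power_law_deriv (f : R -> R) th : (forall y, 0 < y -> f y = Rpower y th) ->
  forall y, 0 < y -> y * Derive f y = th * f y.
Proof.
  intros Hp y Hy.
  assert (E : Derive f y = th * Rpower y (th - 1)).
  { rewrite (Derive_ext_loc f (fun z => Rpower z th)).
    - apply is_derive_unique, is_derive_Reals, derivable_pt_lim_power, Hy.
    - exists (mkposreal y Hy). intros z Hz. apply ball_R in Hz. simpl in Hz.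
      apply Hp. apply Rabs_def2 in Hz. lra. }
  rewrite E, Hp by auto.
  rewrite <- (Rpower_1 y) at 1 by exact Hy. rewrite Rmult_comm, Rmult_assoc, <- Rpower_plus.
  f_equal. f_equal. ring.
Qed.

Lemma log_law_deriv (f : R -> R) : (forall y, 0 < y -> f y = ln y) -> forall y, 0 < y -> y * Derive f y = 1.
Proof.
  intros Hp y Hy. rewrite (Derive_ext_loc f ln).
  - rewrite (is_derive_unique _ _ _ (proj2 (is_derive_Reals _ _ _) (derivable_pt_lim_ln y Hy))).
    field. lra.
  - exists (mkposreal y Hy). intros z Hz. apply ball_R in Hz. simpl in Hz.
    apply Hp. apply Rabs_def2 in Hz. lra.
Qed.

Lemma abs_RInt_le_bound (h : R -> R) a b M :
  (forall z, Rmin a b <= z <= Rmax a b -> Rabs (h z) <= M) ->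
  ex_RInt h a b -> Rabs (RInt h a b) <= Rabs (b - a) * M.
Proof.
  intros HM Hex. destruct (Rle_dec a b) as [Hab | Hab].
  - rewrite (Rabs_right (b - a)) by lra. apply abs_RInt_le_const; auto.
    intros; apply HM; rewrite Rmin_left, Rmax_right; lra.
  - rewrite <- (opp_RInt_swap h b a) by (apply ex_RInt_swap; auto).
    change (opp (RInt h b a)) with (- RInt h b a). rewrite Rabs_Ropp.
    replace (Rabs (b - a)) with (a - b) by (rewrite (Rabs_left (b - a)); lra).
    apply abs_RInt_le_const; [lra | apply ex_RInt_swap; auto |].
    intros; apply HM; rewrite Rmin_right, Rmax_left; lra.
Qed.

Lemma at_right_0_small d : 0 < d -> at_right 0 (fun s => 0 < s < d).
Proof.
  intro Hd. exists (mkposreal d Hd). intros s Hs Hpos. apply ball_R in Hs. simpl in Hs.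
  rewrite Rminus_0_r in Hs. apply Rabs_def2 in Hs. lra.
Qed.

(** Integrals of a jointly continuous function depending on a parameter *)

Section ParametricIntegral.
Variables (h : R -> R -> R) (T : R).
Hypothesis HT : 0 < T.
Hypothesis Hh : forall z s, 0 <= s < T -> cont2 h z s.

Lemma ex_RInt_slice s a b : 0 <= s < T -> ex_RInt (fun z => h z s) a b.
Proof.
  intro Hs. apply (ex_RInt_continuous (V := R_CompleteNormedModule)).
  intros z _. apply cont2_slice, Hh, Hs.
Qed.

(* Over a fixed interval, the integral is right-continuous in the parameter at 0
   (uniform continuity of h on the compact [a,b] x [0, d]). *)
Lemma RInt_slice_right_cont a b :
  filterlim (fun s => RInt (fun z => h z s) a b) (at_right 0)
    (locally (RInt (fun z => h z 0) a b)).
Proof.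
  apply filterlim_locally. intros eps.
  assert (Hw : 0 < Rabs (b - a) + 1) by (assert (Hp := Rabs_pos (b - a)); lra).
  assert (He : 0 < eps / (Rabs (b - a) + 1)) by (apply Rdiv_lt_0_compat; [apply cond_pos | exact Hw]).
  destruct (uniform_continuity_2d_1d h (Rmin a b) (Rmax a b) 0) with (eps := mkposreal _ He)
    as [d Hd].
  { intros z _. apply cont2_2d, Hh. lra. }
  simpl in Hd.
  assert (Hd0 : 0 < Rmin d T) by (apply Rmin_glb_lt; [apply cond_pos | exact HT]).
  apply filter_imp with (2 := at_right_0_small _ Hd0). intros s Hs.
  assert (D1 := Rmin_l d T). assert (D2 := Rmin_r d T).
  change (Rabs (RInt (fun z => h z s) a b - RInt (fun z => h z 0) a b) < eps).
  rewrite <- (RInt_minus (V := R_CompleteNormedModule)) by (apply ex_RInt_slice; lra).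
  eapply Rle_lt_trans.
  - apply abs_RInt_le_bound with (M := eps / (Rabs (b - a) + 1)).
    + intros z Hz. left. apply (Hd z 0 z s Hz); try lra.
      rewrite Rminus_eq_0, Rabs_R0. apply cond_pos.
    + apply (ex_RInt_minus (V := R_NormedModule)); apply ex_RInt_slice; lra.
  - replace (Rabs (b - a) * (eps / (Rabs (b - a) + 1))) with
      (eps * (Rabs (b - a) / (Rabs (b - a) + 1))) by (field; lra).
    assert (Rabs (b - a) / (Rabs (b - a) + 1) < 1).
    { apply Rmult_lt_reg_r with (Rabs (b - a) + 1); [lra |].
      unfold Rdiv. rewrite Rmult_assoc, Rinv_l by lra. lra. }
    destruct eps as [e Hep]; simpl in *. nra.
Qed.

(* The integral over a shrinking interval [c, alpha s], alpha s -> c, tends to 0,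
   since h stays bounded near (c, 0). *)
Lemma RInt_slice_shrinking c (alpha : R -> R) :
  filterlim alpha (at_right 0) (locally c) ->
  filterlim (fun s => RInt (fun z => h z s) c (alpha s)) (at_right 0) (locally 0).
Proof.
  intro Halpha. apply filterlim_locally. intros eps.
  set (M := Rabs (h c 0) + 1).
  assert (HM : 0 < M) by (unfold M; assert (Hp := Rabs_pos (h c 0)); lra).
  destruct (cont2_2d _ _ _ (Hh c 0 ltac:(lra)) (mkposreal 1 Rlt_0_1)) as [d Hd]. simpl in Hd.
  assert (Hd0 : 0 < Rmin d T) by (apply Rmin_glb_lt; [apply cond_pos | exact HT]).
  assert (HeM : 0 < Rmin d (eps / M)) by (apply Rmin_glb_lt; [apply cond_pos | apply Rdiv_lt_0_compat; [apply cond_pos | exact HM]]).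
  assert (Hnear := proj1 (filterlim_locally alpha c) Halpha (mkposreal _ HeM)).
  generalize (filter_and _ _ (at_right_0_small _ Hd0) Hnear).
  apply filter_imp. intros s [Hs Has]. apply ball_R in Has. simpl in Has.
  assert (D1 := Rmin_l d T). assert (D2 := Rmin_r d T).
  assert (E1 := Rmin_l d (eps / M)). assert (E2 := Rmin_r d (eps / M)).
  change (Rabs (RInt (fun z => h z s) c (alpha s) - 0) < eps). rewrite Rminus_0_r.
  eapply Rle_lt_trans.
  - apply abs_RInt_le_bound with (M := M).
    + intros z Hz. apply Rabs_between in Hz.
      assert (Rabs (h z s - h c 0) < 1) by (apply Hd; [lra | rewrite Rminus_0_r, Rabs_right; lra]).
      unfold M. assert (Hq := Rabs_triang (h z s - h c 0) (h c 0)).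
      replace (h z s - h c 0 + h c 0) with (h z s) in Hq by ring. lra.
    + apply ex_RInt_slice. lra.
  - apply Rlt_le_trans with (eps / M * M).
    + apply Rmult_lt_compat_r; lra.
    + right; field; lra.
Qed.

(* The integral is jointly right-continuous in the bounds and the parameter at s = 0:
   split int_{alpha s}^{beta s} at a and b. *)
Lemma RInt_moving_bounds_right_cont a b (alpha beta : R -> R) :
  filterlim alpha (at_right 0) (locally a) -> filterlim beta (at_right 0) (locally b) ->
  filterlim (fun s => RInt (fun z => h z s) (alpha s) (beta s)) (at_right 0)
    (locally (RInt (fun z => h z 0) a b)).
Proof.
  intros Halpha Hbeta. apply filterlim_locally. intros eps.
  assert (He3 : 0 < eps / 3) by (destruct eps; simpl; lra).
  assert (La := proj1 (filterlim_locally _ _) (RInt_slice_shrinking a alpha Halpha) (mkposreal _ He3)).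
  assert (Lb := proj1 (filterlim_locally _ _) (RInt_slice_shrinking b beta Hbeta) (mkposreal _ He3)).
  assert (Lab := proj1 (filterlim_locally _ _) (RInt_slice_right_cont a b) (mkposreal _ He3)).
  generalize (filter_and _ _ (at_right_0_small _ HT) (filter_and _ _ La (filter_and _ _ Lb Lab))).
  apply filter_imp. intros s [Hs [Ha [Hb Hab]]].
  apply ball_R in Ha, Hb, Hab. simpl in Ha, Hb, Hab. rewrite Rminus_0_r in Ha, Hb.
  change (Rabs (RInt (fun z => h z s) (alpha s) (beta s) - RInt (fun z => h z 0) a b) < eps).
  assert (Hex : forall p q, ex_RInt (fun z => h z s) p q) by (intros; apply ex_RInt_slice; lra).
  rewrite <- (RInt_Chasles (V := R_CompleteNormedModule) _ (alpha s) a (beta s)) by auto.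
  rewrite <- (RInt_Chasles (V := R_CompleteNormedModule) _ a b (beta s)) by auto.
  rewrite <- (opp_RInt_swap _ a (alpha s)) by auto.
  change (Rabs (- RInt (fun z => h z s) a (alpha s)
     + (RInt (fun z => h z s) a b + RInt (fun z => h z s) b (beta s)) - RInt (fun z => h z 0) a b) < eps).
  set (A := RInt (fun z => h z s) a (alpha s)). set (B := RInt (fun z => h z s) b (beta s)).
  set (C := RInt (fun z => h z s) a b - RInt (fun z => h z 0) a b).
  replace (- A + (RInt (fun z => h z s) a b + B) - RInt (fun z => h z 0) a b) with (- A + B + C)
    by (unfold C; ring).
  assert (T1 := Rabs_triang (- A + B) C). assert (T2 := Rabs_triang (- A) B).
  rewrite Rabs_Ropp in T2. fold A in Ha. fold B in Hb. fold C in Hab. destruct eps as [e He]; simpl in *. lra.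
Qed.

End ParametricIntegral.

(* [auto_derive] returns derivatives containing eta-expanded functions; contract them
   and close the resulting real identity by [field]. *)
Ltac contract_eta :=
  repeat match goal with |- context [fun x => ?g x] => change (fun x => g x) with g end.
Ltac field_R := match goal with |- ?a = ?b => change (@eq R a b) end; contract_eta; field.

Lemma chain_rule_1d (F g : R -> R) x dF dg : is_derive F (g x) dF -> is_derive g x dg ->
  is_derive (fun y => F (g y)) x (dF * dg).
Proof.
  intros H1 H2. apply is_derive_Reals. apply is_derive_Reals in H1, H2.
  exact (derivable_pt_lim_comp g F x dg dF H2 H1).
Qed.

Lemma is_derive_scaled_mult (A B : R -> R) c t dA dB : is_derive A t dA -> is_derive B t dB ->
  is_derive (fun s => c * A s * B s) t (c * (dA * B t + A t * dB)).
Proof.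
  intros H1 H2. auto_derive.
  - repeat split; [exists dA | exists dB]; auto.
  - contract_eta. rewrite (is_derive_unique _ _ _ H1), (is_derive_unique _ _ _ H2). field_R.
Qed.

Lemma is_derive_scaled_div (A N : R -> R) c t dA dN :
  is_derive A t dA -> is_derive N t dN -> N t <> 0 ->
  is_derive (fun s => c * A s / N s) t (c * ((dA * N t - A t * dN) / (N t) ^ 2)).
Proof.
  intros H1 H2 H3. auto_derive.
  - repeat split; auto; [exists dA | exists dN]; auto.
  - contract_eta. rewrite (is_derive_unique _ _ _ H1), (is_derive_unique _ _ _ H2). field_R; auto.
Qed.

Lemma is_derive_value (F : R -> R) x l l' : is_derive F x l -> l = l' -> is_derive F x l'.
Proof. intros H E; subst; exact H. Qed.

Lemma locally_open_interval T s : 0 < s < T -> locally s (fun y => 0 < y < T).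
Proof.
  intros Hs. assert (H0 : 0 < Rmin s (T - s)) by (apply Rmin_glb_lt; lra).
  exists (mkposreal _ H0). intros y Hy. apply ball_R in Hy. simpl in Hy.
  assert (M1 := Rmin_l s (T - s)). assert (M2 := Rmin_r s (T - s)).
  apply Rabs_def2 in Hy. lra.
Qed.

Lemma pt_ext_time (F G : R -> R -> R) T x t : 0 < t < T ->
  (forall s, 0 < s < T -> F x s = G x s) -> pt F x t = pt G x t.
Proof.
  intros Ht HFG. apply Derive_ext_loc.
  apply filter_imp with (2 := locally_open_interval T t Ht). exact HFG.
Qed.

Section MeanFieldGame.
Variables (f : R -> R) (u m gamma : R -> R -> R) (T : R) (U : R -> R -> Prop).
Hypotheses (HT : 0 < T) (Hf : C2_pos f) (Hf' : forall y, 0 < y -> 0 < Derive f y)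
  (HU : open2 U) (HUdom : forall x t, 0 <= t < T -> U x t)
  (Hu : Ck 3 U u) (Hm : Ck 2 U m) (Hmpos : forall x t, 0 <= t < T -> 0 < m x t)
  (HHJ : forall x t, 0 < t < T -> - pt u x t + / 2 * (px u x t) ^ 2 = f (m x t))
  (HFP : forall x t, 0 < t < T -> pt m x t - px (fun y s => m y s * px u y s) x t = 0)
  (Hgc : forall x, filterlim (fun s => gamma x s) (at_right 0) (locally x))
  (Hgode : forall x t, 0 < t < T -> is_derive (fun s => gamma x s) t (- px u (gamma x t) t)).

(* the characteristics move with velocity -u_x; u_xx is minus its divergence *)
Local Notation q := (px u).
Local Notation r := (px (px u)).

Let u_C2 : Ck 2 U u := Ck_weaken _ _ _ Hu.
Let ux_C2 : Ck 2 U q := proj1 (proj2 Hu).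
Let uxx_C1 : Ck 1 U r := proj1 (proj2 ux_C2).
Let m_C1 : Ck 1 U m := Ck_weaken _ _ _ Hm.
Let mx_C1 : Ck 1 U (px m) := proj1 (proj2 Hm).
Let mt_C1 : Ck 1 U (pt m) := proj2 (proj2 Hm).

Lemma ex_derive_x (g : R -> R -> R) k x t : Ck (S k) U g -> 0 <= t < T ->
  ex_derive (fun y => g y t) x.
Proof. intros H Ht. apply (Ck_partials k U g x t H (HUdom x t Ht)). Qed.

Lemma ex_derive_t (g : R -> R -> R) k x t : Ck (S k) U g -> 0 <= t < T ->
  ex_derive (fun s => g x s) t.
Proof. intros H Ht. apply (Ck_partials k U g x t H (HUdom x t Ht)). Qed.

Lemma cont_slice (g : R -> R -> R) k x t : Ck k U g -> 0 <= t < T -> continuous (fun y => g y t) x.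
Proof. intros H Ht. apply cont2_slice, (Ck_cont k U g x t H (HUdom x t Ht)). Qed.

Lemma m_cont2 x t : 0 <= t < T -> cont2 m x t.
Proof. intro Ht. apply (Ck_cont 2 U m x t Hm (HUdom x t Ht)). Qed.

(** The PDE system in expanded form *)

Lemma FP_expanded y s : 0 < s < T -> pt m y s = px m y s * q y s + m y s * r y s.
Proof.
  intros Hs. assert (H := HFP y s Hs). unfold px at 1 in H.
  rewrite Derive_mult in H.
  - unfold px in *. lra.
  - apply (ex_derive_x m 1); [exact Hm | lra].
  - apply (ex_derive_x q 1); [exact ux_C2 | lra].
Qed.

Lemma HJ_x z s : 0 < s < T -> - pt q z s + q z s * r z s = Derive f (m z s) * px m z s.
Proof.
  intros Hs. assert (Hs' : 0 <= s < T) by lra.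
  assert (Hlhs : is_derive (fun y => - pt u y s + / 2 * (q y s) ^ 2) z (- pt q z s + q z s * r z s)).
  { rewrite <- (C2_schwarz U u z s HU u_C2 (HUdom z s Hs')). auto_derive.
    - split; [apply (ex_derive_x (pt u) 0); auto; exact (proj2 (proj2 u_C2)) |].
      split; [apply (ex_derive_x q 1); auto; exact ux_C2 | auto].
    - unfold px, pt. field_R. }
  assert (Hrhs : is_derive (fun y => f (m y s)) z (Derive f (m z s) * px m z s)).
  { auto_derive.
    - split; [apply Hf, Hmpos; auto |]. split; [apply (ex_derive_x m 1); auto; exact Hm | auto].
    - unfold px. field_R. }
  rewrite <- (is_derive_unique _ _ _ Hlhs), <- (is_derive_unique _ _ _ Hrhs).
  apply Derive_ext. intro y. apply HHJ, Hs.
Qed.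

(* Hamilton-Jacobi differentiated twice in x; this is the identity behind the lemma:
   f''(m) m_x^2 + f'(m) m_xx + u_xxt - u_x u_xxx - u_xx^2 = 0. *)
Lemma HJ_xx y s : 0 < s < T ->
  Derive (Derive f) (m y s) * (px m y s) ^ 2 + Derive f (m y s) * px (px m) y s
  + pt r y s - q y s * px r y s - (r y s) ^ 2 = 0.
Proof.
  intros Hs. assert (Hs' : 0 <= s < T) by lra.
  assert (Hlhs : is_derive (fun z => - pt q z s + q z s * r z s) y
                   (- pt r y s + r y s * r y s + q y s * px r y s)).
  { rewrite <- (C2_schwarz U q y s HU ux_C2 (HUdom y s Hs')). auto_derive.
    - split; [apply (ex_derive_x (pt q) 0); auto; exact (proj2 (proj2 ux_C2)) |].
      split; [apply (ex_derive_x q 1); auto; exact ux_C2 |].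
      split; [apply (ex_derive_x r 0); auto; exact uxx_C1 | auto].
    - unfold px, pt. field_R. }
  assert (Hrhs : is_derive (fun z => Derive f (m z s) * px m z s) y
     (Derive (Derive f) (m y s) * (px m y s) ^ 2 + Derive f (m y s) * px (px m) y s)).
  { auto_derive.
    - split; [apply Hf, Hmpos; auto |]. split; [apply (ex_derive_x m 1); auto; exact Hm |].
      split; [apply (ex_derive_x (px m) 0); auto; exact mx_C1 | auto].
    - unfold px. field_R. }
  assert (E : - pt r y s + r y s * r y s + q y s * px r y s =
      Derive (Derive f) (m y s) * (px m y s) ^ 2 + Derive f (m y s) * px (px m) y s).
  { rewrite <- (is_derive_unique _ _ _ Hlhs), <- (is_derive_unique _ _ _ Hrhs).
    apply Derive_ext. intro z. apply HJ_x, Hs. }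
  lra.
Qed.

(** Conservation of mass along the flow *)

Definition mass_between a b s := RInt (fun z => m z s) (gamma a s) (gamma b s).

(* By Fokker-Planck, m_t = (m u_x)_x integrates to a boundary flux. *)
Lemma RInt_mt A B s : 0 < s < T -> RInt (fun z => pt m z s) A B = m B s * q B s - m A s * q A s.
Proof.
  intros Hs.
  assert (Hflux : forall z, pt m z s = Derive (fun y => m y s * q y s) z).
  { intro z. assert (H := HFP z s Hs). unfold px at 1 in H. lra. }
  rewrite (RInt_ext _ (Derive (fun z => m z s * q z s))) by (intros; apply Hflux).
  rewrite RInt_Derive; [reflexivity | |].
  - intros z _. apply ex_derive_mult.
    + apply (ex_derive_x m 1); [exact Hm | lra].
    + apply (ex_derive_x q 1); [exact ux_C2 | lra].
  - intros z _. apply continuous_ext with (fun z => pt m z s); [exact Hflux |].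
    apply (cont_slice (pt m) 1); [exact mt_C1 | lra].
Qed.

(* Leibniz rule: the boundary terms -m u_x (gamma_t = -u_x) cancel the flux. *)
Lemma mass_between_deriv a b s : 0 < s < T -> is_derive (mass_between a b) s 0.
Proof.
  intros Hs. unfold mass_between.
  assert (Hloc := locally_open_interval T s Hs).
  assert (Hex : forall y, 0 < y < T -> forall p q, ex_RInt (fun z => m z y) p q).
  { intros y Hy p q'. apply (ex_RInt_slice m T); [intros; apply m_cont2; lra | lra]. }
  assert (Hmt : forall x' t, 0 < x' < T -> continuity_2d_pt (fun u0 v => Derive (fun z0 => m v z0) u0) x' t).
  { intros x' t Hx'. apply (cont2_swap (pt m)). apply (Ck_cont 1 U _ _ _ mt_C1). apply HUdom; lra. }
  assert (Hbd : forall z, locally_2d (fun x' t => continuity_2d_pt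
        (fun u0 v => Derive (fun z0 => m v z0) u0) x' t) s z).
  { intros z. assert (H0 : 0 < Rmin s (T - s)) by (apply Rmin_glb_lt; lra).
    exists (mkposreal _ H0). simpl. intros x' t Hx' _.
    assert (M1 := Rmin_l s (T - s)). assert (M2 := Rmin_r s (T - s)).
    apply Rabs_def2 in Hx'. apply Hmt. lra. }
  assert (H := is_derive_RInt_param_bound_comp (fun s z => m z s) (fun s => gamma a s)
     (fun s => gamma b s) s (- q (gamma a s) s) (- q (gamma b s) s)).
  simpl in H.
  replace 0 with (RInt (fun t => Derive (fun u0 => m t u0) s) (gamma a s) (gamma b s) +
      - m (gamma a s) s * - q (gamma a s) s + m (gamma b s) s * - q (gamma b s) s).
  2:{ change (RInt (fun t => pt m t s) (gamma a s) (gamma b s) +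
      - m (gamma a s) s * - q (gamma a s) s + m (gamma b s) s * - q (gamma b s) s = 0).
      rewrite RInt_mt by auto. ring. }
  apply H; clear H.
  - apply filter_imp with (2 := Hloc). intros; apply Hex; lra.
  - exists (mkposreal 1 Rlt_0_1). apply filter_imp with (2 := Hloc). intros; apply Hex; lra.
  - exists (mkposreal 1 Rlt_0_1). apply filter_imp with (2 := Hloc). intros; apply Hex; lra.
  - apply Hgode; auto.
  - apply Hgode; auto.
  - exists (mkposreal 1 Rlt_0_1). apply filter_imp with (2 := Hloc). intros y Hy t _.
    apply (ex_derive_t m 1); [exact Hm | lra].
  - intros t _. apply Hmt. exact Hs.
  - apply Hbd.
  - apply Hbd.
  - apply continuity_pt_filterlim. apply (cont_slice m 2); [exact Hm | lra].
  - apply continuity_pt_filterlim. apply (cont_slice m 2); [exact Hm | lra].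
Qed.

Lemma mass_between_const a b s1 s2 : 0 < s1 < T -> 0 < s2 < T ->
  mass_between a b s1 = mass_between a b s2.
Proof.
  intros H1 H2.
  assert (Hin : forall x, Rmin s1 s2 <= x <= Rmax s1 s2 -> 0 < x < T).
  { intros x Hx. unfold Rmin, Rmax in Hx. destruct Rle_dec in Hx; lra. }
  destruct (MVT_gen (mass_between a b) s1 s2 (fun _ => 0)) as [c [_ E]].
  - intros x Hx. apply mass_between_deriv, Hin. lra.
  - intros x Hx. eapply is_derive_continuity_pt. apply mass_between_deriv, Hin, Hx.
  - lra.
Qed.

Lemma mass_between_initial a b t : 0 < t < T -> mass_between a b t = RInt (m0 m) a b.
Proof.
  intros Ht.
  apply (filterlim_locally_unique (F := at_right 0) (mass_between a b)).
  - apply (filterlim_ext_loc (fun _ => mass_between a b t)); [| apply filterlim_const].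
    apply filter_imp with (2 := at_right_0_small T HT). intros s Hs. apply mass_between_const; lra.
  - apply (RInt_moving_bounds_right_cont m T HT); [intros; apply m_cont2; lra | apply Hgc | apply Hgc].
Qed.

(** The characteristic flow *)

(* Differentiating int_{gamma(x,t)}^{gamma(y,t)} m(z,t) dz = int_x^y m0 in y gives
   gamma_x = m0 / m(gamma, t). *)
Lemma gamma_x_derive x t : 0 < t < T ->
  is_derive (fun y => gamma y t) x (m x 0 / m (gamma x t) t).
Proof.
  intros Ht.
  change (is_derive (fun y => gamma y t) x (m0 m x / (fun y => m y t) ((fun y => gamma y t) x))).
  apply (increasing_factor_derive (fun y => RInt (fun z => m z t) (gamma x t) y) (fun y => m y t)
    (fun y => RInt (m0 m) x y) (m0 m) (fun y => gamma y t) x).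
  - intro y. apply (is_derive_RInt (V := R_CompleteNormedModule) (fun z => m z t) _ (gamma x t)).
    + apply filter_forall. intro b0. apply RInt_correct.
      apply (ex_RInt_slice m T); [intros; apply m_cont2; lra | lra].
    + apply (cont_slice m 2); [exact Hm | lra].
  - intros y. apply Hmpos; lra.
  - intro y. apply (is_derive_RInt (V := R_CompleteNormedModule) (m0 m) _ x).
    + apply filter_forall. intro b0. apply RInt_correct.
      apply (ex_RInt_slice m T) with (s := 0); [intros; apply m_cont2; lra | lra].
    + apply (cont_slice m 2 y 0); [exact Hm | lra].
  - apply (cont_slice m 2); [exact Hm | lra].
  - apply (cont_slice m 2 x 0); [exact Hm | lra].
  - intro y. apply (mass_between_initial x y t Ht).
Qed.

Lemma gamma_x_eq x t : 0 < t < T -> px gamma x t = m x 0 / m (gamma x t) t.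
Proof. intros Ht. apply px_is_derive, gamma_x_derive, Ht. Qed.

Lemma along_char_x (g : R -> R -> R) k x t : Ck (S k) U g -> 0 < t < T ->
  is_derive (fun y => g (gamma y t) t) x (px g (gamma x t) t * (m x 0 / m (gamma x t) t)).
Proof.
  intros Hg Ht. apply (chain_rule_1d (fun y => g y t) (fun y => gamma y t)).
  - apply Derive_correct. apply (ex_derive_x g k); auto; lra.
  - apply gamma_x_derive, Ht.
Qed.

Lemma along_char_t (g : R -> R -> R) x t : Ck 1 U g -> 0 < t < T ->
  is_derive (fun s => g (gamma x s) s) t
    (px g (gamma x t) t * (- q (gamma x t) t) + pt g (gamma x t) t).
Proof. intros Hg Ht. apply chain_rule_curve with U; auto. apply HUdom; lra. Qed.

Lemma density_along_char x t : 0 < t < T ->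
  is_derive (fun s => m (gamma x s) s) t (m (gamma x t) t * r (gamma x t) t).
Proof.
  intros Ht. assert (H := along_char_t m x t m_C1 Ht). rewrite FP_expanded in H by auto.
  replace (m (gamma x t) t * r (gamma x t) t) with
    (px m (gamma x t) t * - q (gamma x t) t
     + (px m (gamma x t) t * q (gamma x t) t + m (gamma x t) t * r (gamma x t) t)) by ring.
  exact H.
Qed.

Lemma density_along_char_pos x s : 0 < s < T -> 0 < m (gamma x s) s.
Proof. intros; apply Hmpos; lra. Qed.

Lemma f_derive y : 0 < y -> is_derive f y (Derive f y).
Proof. intros; apply Derive_correct, Hf; auto. Qed.

Lemma f'_derive y : 0 < y -> is_derive (Derive f) y (Derive (Derive f) y).
Proof. intros; apply Derive_correct, Hf; auto. Qed.

(** Derivatives of v = f(m(gamma, t)) and of the two fluxes *)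

Local Notation v := (vfun f m gamma).

Lemma v_x_derive x t : 0 < t < T -> is_derive (fun y => v y t) x
  (Derive f (m (gamma x t) t) * (px m (gamma x t) t * (m x 0 / m (gamma x t) t))).
Proof.
  intros Ht. apply (chain_rule_1d f (fun z => m (gamma z t) t)).
  - apply f_derive, density_along_char_pos, Ht.
  - apply (along_char_x m 1); [exact Hm | exact Ht].
Qed.

Lemma v_t_derive x s : 0 < s < T -> is_derive (fun s' => v x s') s
  (Derive f (m (gamma x s) s) * (m (gamma x s) s * r (gamma x s) s)).
Proof.
  intros Hs. apply (chain_rule_1d f (fun s' => m (gamma x s') s')).
  - apply f_derive, density_along_char_pos, Hs.
  - apply density_along_char, Hs.
Qed.

Lemma pt_v x s : 0 < s < T ->
  pt v x s = Derive f (m (gamma x s) s) * (m (gamma x s) s * r (gamma x s) s).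
Proof. intros Hs. apply pt_is_derive, v_t_derive, Hs. Qed.

Lemma flux_x_along y t : 0 < t < T ->
  flux_x v gamma y t = Derive f (m (gamma y t) t) * px m (gamma y t) t.
Proof.
  intros Ht. unfold flux_x. rewrite gamma_x_eq by auto.
  rewrite (px_is_derive _ _ _ _ (v_x_derive y t Ht)).
  assert (H1 := density_along_char_pos y t Ht). assert (H2 := Hmpos y 0 ltac:(lra)).
  field. lra.
Qed.

Lemma flux_x_derive x t : 0 < t < T ->
  is_derive (fun y => flux_x v gamma y t) x
    (m x 0 / m (gamma x t) t * (Derive (Derive f) (m (gamma x t) t) * (px m (gamma x t) t) ^ 2
       + Derive f (m (gamma x t) t) * px (px m) (gamma x t) t)).
Proof.
  intros Ht.
  apply is_derive_ext with (f := fun y => 1 * Derive f (m (gamma y t) t) * px m (gamma y t) t).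
  { intro y. rewrite flux_x_along by auto. now rewrite Rmult_1_l. }
  assert (Hf'n : is_derive (fun y => Derive f (m (gamma y t) t)) x
     (Derive (Derive f) (m (gamma x t) t) * (px m (gamma x t) t * (m x 0 / m (gamma x t) t)))).
  { apply (chain_rule_1d (Derive f) (fun z => m (gamma z t) t)).
    - apply f'_derive, density_along_char_pos, Ht.
    - apply (along_char_x m 1); [exact Hm | exact Ht]. }
  assert (H := is_derive_scaled_mult _ _ 1 x _ _ Hf'n (along_char_x (px m) 0 x t mx_C1 Ht)).
  assert (HN := density_along_char_pos x t Ht).
  eapply is_derive_value; [exact H | cbv beta; field_R; lra].
Qed.

Lemma flux_t_along x s : 0 < s < T ->
  flux_t f m v gamma x s = m x 0 * r (gamma x s) s / m (gamma x s) s.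
Proof.
  intros Hs. unfold flux_t, m0. rewrite gamma_x_eq, pt_v by auto.
  assert (HN := density_along_char_pos x s Hs). assert (H0 := Hmpos x 0 ltac:(lra)).
  replace (m x 0 / (m x 0 / m (gamma x s) s)) with (m (gamma x s) s) by (field; lra).
  assert (Hd := Hf' _ HN). field. lra.
Qed.

Lemma flux_t_derive x t : 0 < t < T ->
  is_derive (fun s => flux_t f m v gamma x s) t
    (m x 0 / m (gamma x t) t * (pt r (gamma x t) t - q (gamma x t) t * px r (gamma x t) t
       - (r (gamma x t) t) ^ 2)).
Proof.
  intros Ht. assert (HN := density_along_char_pos x t Ht).
  apply is_derive_ext_loc with (f := fun s => m x 0 * r (gamma x s) s / m (gamma x s) s).
  { apply filter_imp with (2 := locally_open_interval T t Ht). intros s Hs.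
    symmetry. apply flux_t_along, Hs. }
  eapply is_derive_value.
  - apply (is_derive_scaled_div (fun s => r (gamma x s) s) (fun s => m (gamma x s) s)).
    + apply along_char_t; [exact uxx_C1 | exact Ht].
    + apply density_along_char, Ht.
    + lra.
  - field_R. lra.
Qed.

(* The general identity: both flux derivatives are (m0 / m) times the two halves of
   the twice-differentiated Hamilton-Jacobi equation. *)
Lemma flux_identity x t : 0 < t < T ->
  ex_derive (fun y => flux_x v gamma y t) x /\
  ex_derive (fun s => flux_t f m v gamma x s) t /\
  - px (flux_x v gamma) x t - pt (flux_t f m v gamma) x t = 0.
Proof.
  intros Ht.
  assert (Hx := flux_x_derive x t Ht). assert (Ht' := flux_t_derive x t Ht).
  split; [eexists; exact Hx | split; [eexists; exact Ht' |]].
  rewrite (px_is_derive _ _ _ _ Hx), (pt_is_derive _ _ _ _ Ht').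
  assert (HJ := HJ_xx (gamma x t) t Ht).
  replace (- (m x 0 / m (gamma x t) t * (Derive (Derive f) (m (gamma x t) t) * (px m (gamma x t) t) ^ 2
       + Derive f (m (gamma x t) t) * px (px m) (gamma x t) t))
     - m x 0 / m (gamma x t) t * (pt r (gamma x t) t - q (gamma x t) t * px r (gamma x t) t
       - (r (gamma x t) t) ^ 2))
    with (- (m x 0 / m (gamma x t) t) * (Derive (Derive f) (m (gamma x t) t) * (px m (gamma x t) t) ^ 2
       + Derive f (m (gamma x t) t) * px (px m) (gamma x t) t + pt r (gamma x t) t
       - q (gamma x t) t * px r (gamma x t) t - (r (gamma x t) t) ^ 2)) by ring.
  rewrite HJ. ring.
Qed.

(** Power and logarithmic couplings *)

(* In general the second flux is gamma_x v_t / (m f'(m)), m evaluated on the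
   characteristic; m f'(m) is theta f(m) for f = m^theta and 1 for f = log m. *)
Lemma flux_t_alt x s : 0 < s < T ->
  flux_t f m v gamma x s
  = px gamma x s / (m (gamma x s) s * Derive f (m (gamma x s) s)) * pt v x s.
Proof.
  intros Hs. rewrite flux_t_along, gamma_x_eq, pt_v by auto.
  assert (HN := density_along_char_pos x s Hs). assert (H0 := Hmpos x 0 ltac:(lra)).
  assert (Hd := Hf' _ HN). field. lra.
Qed.

Lemma log_divergence_form : (forall y, 0 < y -> f y = ln y) -> forall x t, 0 < t < T ->
  - px (flux_x v gamma) x t - pt (fun y s => px gamma y s * pt v y s) x t = 0.
Proof.
  intros Hp x t Ht.
  rewrite (pt_ext_time _ (flux_t f m v gamma) T x t Ht); [apply (flux_identity x t Ht) |].
  intros s Hs. rewrite flux_t_alt, (log_law_deriv f Hp _ (density_along_char_pos x s Hs)) by exact Hs.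
  field.
Qed.

(* v_x = (v_x / gamma_x) gamma_x, differentiated in x by the product rule. *)
Lemma v_xx_split x t : 0 < t < T ->
  px (px v) x t = px (flux_x v gamma) x t * px gamma x t + flux_x v gamma x t * px (px gamma) x t.
Proof.
  intros Ht.
  assert (Hgx : forall y, px gamma y t = m y 0 / m (gamma y t) t) by (intro; apply gamma_x_eq, Ht).
  assert (Hvx : forall y, px v y t = flux_x v gamma y t * px gamma y t).
  { intro y. unfold flux_x. rewrite Hgx. field.
    assert (H1 := density_along_char_pos y t Ht). assert (H2 := Hmpos y 0 ltac:(lra)). lra. }
  unfold px at 1.
  rewrite (Derive_ext (fun y => px v y t) (fun y => flux_x v gamma y t * px gamma y t) x Hvx).
  rewrite Derive_mult; [reflexivity | |].
  - eexists. apply flux_x_derive, Ht.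
  - apply ex_derive_ext with (fun y => m y 0 / m (gamma y t) t); [intro y; symmetry; apply Hgx |].
    apply ex_derive_div.
    + apply (ex_derive_x m 1); [exact Hm | lra].
    + eexists. apply (along_char_x m 1); [exact Hm | exact Ht].
    + assert (H1 := density_along_char_pos x t Ht). lra.
Qed.

Section PowerCoupling.
Variable th : R.
Hypotheses (Hth : 0 < th) (Hpow : forall y, 0 < y -> f y = Rpower y th).

Lemma v_pos x s : 0 < s < T -> 0 < v x s.
Proof.
  intro Hs. unfold vfun. rewrite Hpow by (apply density_along_char_pos, Hs). apply exp_pos.
Qed.

Lemma power_divergence_form x t : 0 < t < T ->
  - px (flux_x v gamma) x t - pt (fun y s => px gamma y s / (th * v y s) * pt v y s) x t = 0.
Proof.
  intros Ht.
  rewrite (pt_ext_time _ (flux_t f m v gamma) T x t Ht); [apply (flux_identity x t Ht) |].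
  intros s Hs. rewrite flux_t_alt, (power_law_deriv f th Hpow _ (density_along_char_pos x s Hs)) by exact Hs.
  reflexivity.
Qed.

Lemma v_t_power x s : 0 < s < T -> pt v x s = th * v x s * r (gamma x s) s.
Proof.
  intro Hs. rewrite pt_v by exact Hs.
  rewrite <- Rmult_assoc, (Rmult_comm (Derive f _)).
  rewrite (power_law_deriv f th Hpow _ (density_along_char_pos x s Hs)). reflexivity.
Qed.

Lemma v_tt_power x t : 0 < t < T ->
  pt (pt v) x t = th * (pt v x t * r (gamma x t) t
    + v x t * (px r (gamma x t) t * - q (gamma x t) t + pt r (gamma x t) t)).
Proof.
  intro Ht.
  rewrite (pt_ext_time _ (fun y s => th * v y s * r (gamma y s) s) T x t Ht)
    by (intros; apply v_t_power; assumption).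
  apply pt_is_derive. eapply is_derive_value.
  - apply (is_derive_scaled_mult (fun s => v x s) (fun s => r (gamma x s) s)).
    + apply v_t_derive, Ht.
    + apply along_char_t; [exact uxx_C1 | exact Ht].
  - rewrite pt_v by exact Ht. reflexivity.
Qed.

Lemma power_expanded_form x t : 0 < t < T ->
  - pt (pt v) x t
  - th * v x t / (px gamma x t) ^ 2 * px (px v) x t
  + px v x t * (th * v x t / (px gamma x t) ^ 3) * px (px gamma) x t
  + (th + 1) / th * / v x t * (pt v x t) ^ 2 = 0.
Proof.
  intros Ht.
  assert (Hv := v_pos x t Ht). assert (HN := density_along_char_pos x t Ht).
  assert (H0 := Hmpos x 0 ltac:(lra)). assert (HJ := HJ_xx (gamma x t) t Ht).
  rewrite v_tt_power, v_xx_split, (px_is_derive _ _ _ _ (flux_x_derive x t Ht)),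
    (px_is_derive _ _ _ _ (v_x_derive x t Ht)), flux_x_along, v_t_power, gamma_x_eq by exact Ht.
  transitivity (- th * v x t * (Derive (Derive f) (m (gamma x t) t) * px m (gamma x t) t ^ 2
      + Derive f (m (gamma x t) t) * px (px m) (gamma x t) t + pt r (gamma x t) t
      - q (gamma x t) t * px r (gamma x t) t - r (gamma x t) t ^ 2)).
  - field. repeat split; lra.
  - rewrite HJ. ring.
Qed.

End PowerCoupling.

End MeanFieldGame.

Theorem lemma3p5
  (f : R -> R) (u m gamma : R -> R -> R) (T : R) (U : R -> R -> Prop)
  (HT : 0 < T)
  (* f in C^2(0,oo), f' > 0 *)
  (Hf : C2_pos f)
  (Hf' : forall y, 0 < y -> 0 < Derive f y)
  (* classical solution: u in C^3, m in C^2 on an open set containing R x [0,T) *)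
  (HU : open2 U)
  (HUdom : forall x t, 0 <= t < T -> U x t)
  (Hu : Ck 3 U u)
  (Hm : Ck 2 U m)
  (Hmpos : forall x t, 0 <= t < T -> 0 < m x t)
  (* the MFG system in R x (0,T) *)
  (HHJ : forall x t, 0 < t < T ->
      - pt u x t + / 2 * (px u x t) ^ 2 = f (m x t))
  (HFP : forall x t, 0 < t < T ->
      pt m x t - px (fun y s => m y s * px u y s) x t = 0)
  (* u_x has at most linear growth *)
  (Hgrowth : exists C, forall x t, 0 < t < T -> Rabs (px u x t) <= C * (1 + Rabs x))
  (* gamma solves gamma_t = - u_x(gamma, t), gamma(x,0) = x *)
  (Hg0 : forall x, gamma x 0 = x)
  (Hgc : forall x, filterlim (fun s => gamma x s) (at_right 0) (locally x))
  (Hgode : forall x t, 0 < t < T ->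
      is_derive (fun s => gamma x s) t (- px u (gamma x t) t)) :
  let v := vfun f m gamma in
  (* general identity *)
  (forall x t, 0 < t < T ->
      ex_derive (fun y => flux_x v gamma y t) x /\
      ex_derive (fun s => flux_t f m v gamma x s) t /\
      - px (flux_x v gamma) x t - pt (flux_t f m v gamma) x t = 0)
  /\
  (* case f(m) = m^theta *)
  (forall theta, 0 < theta -> (forall y, 0 < y -> f y = Rpower y theta) ->
    forall x t, 0 < t < T ->
      - px (flux_x v gamma) x t
      - pt (fun y s => px gamma y s / (theta * v y s) * pt v y s) x t = 0 /\
      - pt (pt v) x t
      - theta * v x t / (px gamma x t) ^ 2 * px (px v) x t
      + px v x t * (theta * v x t / (px gamma x t) ^ 3) * px (px gamma) x t
      + (theta + 1) / theta * / v x t * (pt v x t) ^ 2 = 0)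
  /\
  (* case f(m) = log m *)
  ((forall y, 0 < y -> f y = ln y) ->
    forall x t, 0 < t < T ->
      - px (flux_x v gamma) x t
      - pt (fun y s => px gamma y s * pt v y s) x t = 0).
Proof.
  intros v. split; [| split].
  - intros x t Ht. apply (flux_identity f u m gamma T U); assumption.
  - intros theta Htheta Hpow x t Ht. split.
    + apply (power_divergence_form f u m gamma T U); assumption.
    + apply (power_expanded_form f u m gamma T U); assumption.
  - intros Hlog x t Ht. apply (log_divergence_form f u m gamma T U); assumption.
Qed.
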